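(* Let $S=(\mathcal{E},\Sigma,X,\mathcal{O})$ be a d-classical entity, so each $O(e,p)=\{x(e,p)\}$ is a singleton. Then for every $A\subseteq X$: $eig(A)=\{(e,p):x(e,p)\in A\}$, and $eig(X\setminus A)=(\mathcal{E}\times\Sigma)\setminus eig(A)=eig(A)^\perp$. Moreover $\mathcal{Y}_{eig}=\mathcal{Y}_{orth}$.
   Context: An entity $S=(\mathcal{E},\Sigma,X,\mathcal{O})$ consists of sets $\mathcal{E},\Sigma$ and for each $e\in\mathcal{E},p\in\Sigma$ a nonempty set $O(e,p)$, with $X=\bigcup O(e,p)$. It is d-classical iff every $O(e,p)$ is a singleton. The central eigen map is $(e,p)\in eig(A)\iff O(e,p)\subseteq A$; $\mathcal{Y}_{eig}=\{eig(A):A\subseteq X\}$. On $\mathcal{E}\times\Sigma$, $(e,p)\perp(f,q)$ iff $O(e,p)\cap O(f,q)=\emptyset$; for $K\subseteq\mathcal{E}\times\Sigma$, $K^\perp=\{a: a\perp b\text{ for all } b\in K\}$; $\mathcal{Y}_{orth}$ is the set of $K$ with $K=(K^\perp)^\perp$. *)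

From mathcomp Require Import all_boot.
From mathcomp Require Export classical_sets.
Set Implicit Arguments. Unset Strict Implicit. Unset Printing Implicit Defensive.
Local Open Scope classical_set_scope.

Definition is_entity (E Sg X : Type) (O : E -> Sg -> set X) : Prop :=
  (forall e p, O e p !=set0) /\ (forall x : X, exists e p, O e p x).

Definition d_classical (E Sg X : Type) (O : E -> Sg -> set X) : Prop :=
  forall e p, exists x : X, O e p = [set x].

Definition eig (E Sg X : Type) (O : E -> Sg -> set X) (A : set X) : set (E * Sg) :=
  [set ep | O ep.1 ep.2 `<=` A].

Definition orth (E Sg X : Type) (O : E -> Sg -> set X) (a b : E * Sg) : Prop :=
  O a.1 a.2 `&` O b.1 b.2 = set0.

Definition perp (E Sg X : Type) (O : E -> Sg -> set X) (K : set (E * Sg)) : set (E * Sg) :=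
  [set a | forall b, K b -> orth O a b].

Definition Y_eig (E Sg X : Type) (O : E -> Sg -> set X) : set (set (E * Sg)) :=
  [set K | exists A : set X, K = eig O A].

Definition Y_orth (E Sg X : Type) (O : E -> Sg -> set X) : set (set (E * Sg)) :=
  [set K | K = perp O (perp O K)].

From mathcomp Require Import all_boot classical_sets boolp.
Set Implicit Arguments. Unset Strict Implicit. Unset Printing Implicit Defensive.
Local Open Scope classical_set_scope.

(* In a d-classical entity every pair (e, p) determines a single outcome
   x(e, p), so eig A is the preimage of A under x and two pairs are orthogonal
   exactly when their outcomes differ.  Hence K^perp is the eigenset of the
   complement of x(K); in particular eig(A)^perp = eig(~A) = ~eig(A), so every
   eigenset is biorthogonal, and every biorthogonal K = (K^perp)^perp is an
   eigenset. *)

Lemma d_classical_outcome (E Sg X : Type) (O : E -> Sg -> set X) :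
  d_classical O -> exists x : E -> Sg -> X, forall e p, O e p = [set x e p].
Proof.
move=> dcO; have [f fP] := choice (fun ep : E * Sg => dcO ep.1 ep.2).
by exists (fun e p => f (e, p)) => e p; apply: fP (e, p).
Qed.

Section ClassicalEntity.
Variables (E Sg X : Type) (O : E -> Sg -> set X) (x : E -> Sg -> X).
Hypothesis Ox : forall e p, O e p = [set x e p].

Let outcome (ep : E * Sg) : X := x ep.1 ep.2.

Lemma eig_classical (A : set X) : eig O A = outcome @^-1` A.
Proof.
apply/seteqP; split=> -[e p]; rewrite /eig /= Ox; first exact.
by move=> Ax y ->.
Qed.

Lemma orth_classical (a b : E * Sg) : orth O a b <-> outcome a <> outcome b.
Proof.
rewrite /orth !Ox; split=> [ab0 ab|neq_ab].
- by have : ([set outcome a] `&` [set outcome b]) (outcome a) by []; rewrite ab0.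
- by apply/seteqP; split=> y // [-> ].
Qed.

Lemma perp_classical (K : set (E * Sg)) : perp O K = eig O (~` (outcome @` K)).
Proof.
rewrite eig_classical; apply/seteqP; split=> a /=.
- by move=> perpK [b Kb ba]; move/orth_classical: (perpK b Kb); apply; rewrite ba.
- by move=> notKa b Kb; apply/orth_classical => ab; apply: notKa; exists b.
Qed.

Lemma eigC (A : set X) : eig O (~` A) = ~` eig O A.
Proof. by rewrite !eig_classical. Qed.

Lemma perp_eig (A : set X) : perp O (eig O A) = ~` eig O A.
Proof.
rewrite perp_classical !eig_classical; apply/seteqP; split=> a /=.
- by move=> notAa Aa; apply: notAa; exists a.
- by move=> notAa [b Ab ba]; apply: notAa; rewrite -ba.
Qed.

Lemma Y_eig_classical : Y_eig O = Y_orth O.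
Proof.
apply/seteqP; split=> K /=.
- by move=> [A ->]; rewrite /Y_orth /= !perp_eig -eigC perp_eig eigC setCK.
- by move=> KK; rewrite KK perp_classical; eexists.
Qed.

End ClassicalEntity.

Theorem mainTheorem8 (E Sg X : Type) (O : E -> Sg -> set X) :
  is_entity O -> d_classical O ->
  (forall x : E -> Sg -> X, (forall e p, O e p = [set x e p]) ->
     forall A : set X, eig O A = [set ep | A (x ep.1 ep.2)]) /\
  (forall A : set X, eig O (~` A) = ~` eig O A /\ ~` eig O A = perp O (eig O A)) /\
  Y_eig O = Y_orth O.
Proof.
move=> _ /d_classical_outcome[x Ox].
split; first by move=> y Oy A; apply: eig_classical.
split; last exact: Y_eig_classical Ox.
by move=> A; rewrite (eigC Ox) (perp_eig Ox).
Qed.
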